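(* For every integer $d\ge 0$ there is a simplicial complex $\Delta$ with $\mathrm{ctd}(\Delta)\ge d$.
   Context: Given convex polytopes $P_1,\dots,P_n\subset\mathbb{R}^d$ each containing the origin and a point $\mu\in\mathbb{R}^d$, write $P_\sigma=\sum_{i\in\sigma}P_i$ (Minkowski sum) for $\sigma\subseteq[n]$, with $P_\emptyset=\{0\}$; the Minkowski complex $\Delta(\mathcal{P};\mu)$ is the simplicial complex on vertex set $[n]$ whose faces are the $\sigma\subseteq[n]$ with $\mu\notin P_\sigma$. The convex threshold dimension $\mathrm{ctd}(\Delta)$ of a simplicial complex $\Delta$ on vertex set $[n]$ is the smallest $d$ such that $\Delta=\Delta(\mathcal{P};\mu)$ for some family $\mathcal{P}=(P_1,\dots,P_n)$ of convex bodies (equivalently, convex polytopes) in $\mathbb{R}^d$ containing the origin and some $\mu\in\mathbb{R}^d$; this is finite for every simplicial complex. *)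

From HB Require Import structures.
From mathcomp Require Import all_boot all_order all_algebra.
From mathcomp Require Import reals.
Set Implicit Arguments. Unset Strict Implicit. Unset Printing Implicit Defensive.
Import Order.TTheory GRing.Theory Num.Theory.
Local Open Scope ring_scope.

Definition simplicial_complex (n : nat) (D : {set {set 'I_n}}) : Prop :=
  forall s t : {set 'I_n}, s \in D -> t \subset s -> t \in D.

Definition in_conv (R : realType) (e : nat) (V : seq 'rV[R]_e) (x : 'rV[R]_e) : Prop :=
  exists w : 'I_(size V) -> R,
    (forall j, 0 <= w j) /\ \sum_j w j = 1 /\ \sum_j w j *: nth 0 V j = x.

Definition in_msum (R : realType) (e n : nat) (P : 'I_n -> seq 'rV[R]_e)
    (s : {set 'I_n}) (x : 'rV[R]_e) : Prop :=
  exists y : 'I_n -> 'rV[R]_e,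
    (forall i, i \in s -> in_conv (P i) (y i)) /\ \sum_(i in s) y i = x.

Definition is_minkowski_complex (R : realType) (e n : nat)
    (P : 'I_n -> seq 'rV[R]_e) (mu : 'rV[R]_e) (D : {set {set 'I_n}}) : Prop :=
  forall s : {set 'I_n}, s \in D <-> ~ in_msum P s mu.

Definition realizable (R : realType) (n : nat) (D : {set {set 'I_n}}) (e : nat) : Prop :=
  exists (P : 'I_n -> seq 'rV[R]_e) (mu : 'rV[R]_e),
    (forall i, in_conv (P i) 0) /\ is_minkowski_complex P mu D.

From HB Require Import structures.
From mathcomp Require Import all_boot all_order all_algebra.
From mathcomp Require Import reals.
From Stdlib Require Import Classical.
Set Implicit Arguments.
Unset Strict Implicit.
Unset Printing Implicit Defensive.
Import Order.TTheory GRing.Theory Num.Theory.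
Local Open Scope ring_scope.

(* Take the boundary complex of the d-dimensional cross-polytope, on vertices
   1, 1', ..., d, d', whose minimal non-faces are the pairs {j, j'}.  In a
   realization in R^e, mu lies in P_j + P_j', say mu = p_j + (mu - p_j).  If
   e < d, the p_j satisfy a nontrivial linear relation sum_j lam_j p_j = 0,
   which up to sign has sum_j lam_j <= 0.  With N the sum of the -lam_j over
   lam_j < 0, this gives
     mu = sum_(lam_j >= 0) (lam_j / N) p_j
          + sum_(lam_j < 0) (-lam_j / N) (mu - p_j)
   with all coefficients in [0, 1].  As every P_i contains the origin, this
   puts mu in P_s for a facet s of the cross-polytope: a contradiction. *)

Section ConvexHulls.
Variable R : realType.

Lemma in_conv_scale e (V : seq 'rV[R]_e) x t :
  in_conv V 0 -> in_conv V x -> 0 <= t <= 1 -> in_conv V (t *: x).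
Proof.
move=> [w0 [w0_ge0 [w0_sum w0_x]]] [w [w_ge0 [w_sum w_x]]] /andP[t_ge0 t_le1].
exists (fun j => t * w j + (1 - t) * w0 j); split; [|split].
- by move=> j; rewrite addr_ge0 ?mulr_ge0 ?subr_ge0.
- by rewrite big_split /= -!mulr_sumr w_sum w0_sum !mulr1 addrC subrK.
- under eq_bigr => j _ do rewrite scalerDl -!scalerA.
  by rewrite big_split /= -!scaler_sumr w_x w0_x scaler0 addr0.
Qed.

Lemma in_msum_pair e n (P : 'I_n -> seq 'rV[R]_e) i k x :
  i != k -> in_msum P [set i; k] x ->
  exists2 y, in_conv (P i) y & in_conv (P k) (x - y).
Proof.
move=> neq_ik [y [y_conv y_sum]]; exists (y i); first exact/y_conv/set21.
rewrite -y_sum big_setU1 ?inE //= big_set1 addrC addrK.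
exact/y_conv/set22.
Qed.

End ConvexHulls.

Lemma exists_linear_relation (F : fieldType) d e (p : 'I_d -> 'rV[F]_e) :
  (e < d)%N ->
  exists2 lam : 'I_d -> F, \sum_j lam j *: p j = 0 & exists j, lam j != 0.
Proof.
move=> lt_ed; pose M := \matrix_j p j.
have : kermx M != 0.
  rewrite kermx_eq0 /row_free; apply: contraL lt_ed => /eqP <-.
  by rewrite -leqNgt rank_leq_col.
case/rowV0Pn => v /sub_kermxP vM v_nz.
exists (fun j => v 0 j); last exact/rV0Pn.
by rewrite -[RHS]vM mulmx_sum_row; apply: eq_bigr => j _; rewrite rowK.
Qed.

Lemma ler_sum_term (R : numDomainType) (I : finType) (Q : pred I) (F : I -> R)
    j :
  Q j -> (forall k, Q k -> 0 <= F k) -> F j <= \sum_(k | Q k) F k.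
Proof.
by move=> Qj F_ge0; rewrite (bigD1 j) //= lerDl sumr_ge0 // => k /andP[/F_ge0].
Qed.

Lemma abs_le_neg_mass (R : realDomainType) (I : finType) (lam : I -> R) i :
  \sum_k lam k <= 0 -> `|lam i| <= \sum_(k | lam k < 0) - lam k.
Proof.
rewrite (bigID (fun k => 0 <= lam k)) /=.
under [X in _ + X]eq_bigl do rewrite -ltNge.
rewrite -[X in _ + X]opprK -sumrN subr_le0 => pos_le_neg.
have [lam_ge0 | lam_lt0] := leP 0 (lam i).
- by rewrite ger0_norm //; apply: le_trans pos_le_neg; apply: ler_sum_term.
- by rewrite ltr0_norm //; apply: ler_sum_term => // k /ltW; rewrite oppr_ge0.
Qed.

Lemma split_lshift m n (j : 'I_m) : split (lshift n j) = inl j.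
Proof. exact: (unsplitK (inl _ j)). Qed.

Lemma split_rshift m n (j : 'I_n) : split (rshift m j) = inr j.
Proof. exact: (unsplitK (inr _ j)). Qed.

Section CrossPolytope.
Variable d : nat.

(* Vertex j is [lshift d j] and its antipode j' is [rshift d j]. *)
Definition cross_complex : {set {set 'I_(d + d)}} :=
  [set s : {set 'I_(d + d)} |
    [forall j, ~~ ((lshift d j \in s) && (rshift d j \in s))]].

Definition cross_facet (b : 'I_d -> bool) : {set 'I_(d + d)} :=
  [set i | match split i with inl j => b j | inr j => ~~ b j end].

Lemma cross_complex_simplicial : simplicial_complex cross_complex.
Proof.
move=> s t; rewrite !inE => /forallP s_face /subsetP sub_ts.
apply/forallP => j; apply: contra (s_face j) => /andP[l_t r_t].
by rewrite sub_ts ?sub_ts.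
Qed.

Lemma cross_pair_notin j : [set lshift d j; rshift d j] \notin cross_complex.
Proof.
by rewrite inE negb_forall; apply/existsP; exists j; rewrite !inE !eqxx orbT.
Qed.

Lemma cross_facet_in b : cross_facet b \in cross_complex.
Proof.
rewrite inE; apply/forallP => j.
by rewrite !inE split_lshift split_rshift andbN.
Qed.

Lemma in_msum_cross_facet (R : realType) e (P : 'I_(d + d) -> seq 'rV[R]_e)
    (b : 'I_d -> bool) (u v : 'I_d -> 'rV[R]_e) :
  (forall j, b j -> in_conv (P (lshift d j)) (u j)) ->
  (forall j, ~~ b j -> in_conv (P (rshift d j)) (v j)) ->
  in_msum P (cross_facet b) (\sum_j (if b j then u j else v j)).
Proof.
move=> u_conv v_conv.
exists (fun i => match split i with inl j => u j | inr j => v j end); split.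
  move=> i; rewrite inE.
  by case: split_ordP => j ->; [exact: u_conv | exact: v_conv].
rewrite big_mkcond big_split_ord /= -big_split; apply: eq_bigr => j _ /=.
by rewrite !inE split_lshift split_rshift; case: (b j); rewrite ?addr0 ?add0r.
Qed.

End CrossPolytope.

Section CrossRealization.
Variables (R : realType) (d e : nat) (P : 'I_(d + d) -> seq 'rV[R]_e).
Variables (mu : 'rV[R]_e) (p : 'I_d -> 'rV[R]_e).
Hypothesis P0 : forall i, in_conv (P i) 0.
Hypothesis Pl : forall j, in_conv (P (lshift d j)) (p j).
Hypothesis Pr : forall j, in_conv (P (rshift d j)) (mu - p j).

Lemma in_msum_cross_facet_of_relation (lam : 'I_d -> R) :
  \sum_j lam j *: p j = 0 -> \sum_j lam j <= 0 -> (exists j, lam j != 0) ->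
  in_msum P (cross_facet (fun j => 0 <= lam j)) mu.
Proof.
move=> rel sum_le0 [j0 lam_j0_neq0].
set N := \sum_(j | lam j < 0) - lam j.
have le_N j : `|lam j| <= N := abs_le_neg_mass j sum_le0.
have N_gt0 : 0 < N by apply: lt_le_trans (le_N j0); rewrite normr_gt0.
pose t j := `|lam j| / N.
have t_01 j : 0 <= t j <= 1.
  by rewrite divr_ge0 ?normr_ge0 ?(ltW N_gt0) // ler_pdivrMr // mul1r le_N.
have decomp :
    \sum_j (if 0 <= lam j then t j *: p j else t j *: (mu - p j)) = mu.
  transitivity (N^-1 *: \sum_j lam j *: p j + (N^-1 * N) *: mu); last first.
    by rewrite rel scaler0 add0r mulVf ?gt_eqF // scale1r.
  rewrite scaler_sumr mulr_sumr scaler_suml [\sum_(j | lam j < 0) _]big_mkcond.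
  rewrite -big_split /=.
  apply: eq_bigr => j _; rewrite /t; case: leP => lam_j.
    by rewrite ger0_norm // addr0 scalerA mulrC.
  rewrite ltr0_norm // scalerBr addrC -scaleNr !scalerA.
  by rewrite ![N^-1 * _]mulrC -mulNr opprK.
rewrite -decomp.
by apply: in_msum_cross_facet => j _; apply: in_conv_scale.
Qed.

Lemma exists_cross_face_msum (lam : 'I_d -> R) :
  \sum_j lam j *: p j = 0 -> (exists j, lam j != 0) ->
  exists2 s, s \in cross_complex d & in_msum P s mu.
Proof.
wlog sum_le0 : lam / \sum_j lam j <= 0 => [gen rel lam_nz | rel lam_nz].
  have [/gen/(_ rel lam_nz) //|sum_gt0] := leP (\sum_j lam j) 0.
  have [j0 lam_j0_neq0] := lam_nz.
  apply: (gen (fun j => - lam j)).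
  - by rewrite sumrN oppr_le0 ltW.
  - by under eq_bigr do rewrite scaleNr; rewrite sumrN rel oppr0.
  - by exists j0; rewrite oppr_eq0.
exists (cross_facet (fun j => 0 <= lam j)); first exact: cross_facet_in.
exact: in_msum_cross_facet_of_relation.
Qed.

End CrossRealization.

Theorem corollary4 (R : realType) (d : nat) :
  exists (n : nat) (D : {set {set 'I_n}}),
    simplicial_complex D /\ forall e : nat, realizable R D e -> (d <= e)%N.
Proof.
exists (d + d), (cross_complex d); split; first exact: cross_complex_simplicial.
move=> e [P [mu [P0 PD]]]; rewrite leqNgt; apply/negP => lt_ed.
have /fin_all_exists2 [p Pl Pr] : forall j : 'I_d,
    exists2 q, in_conv (P (lshift d j)) q & in_conv (P (rshift d j)) (mu - q).
  move=> j; apply: in_msum_pair; first by rewrite eq_lrshift.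
  by apply: NNPP => /PD; apply/negP/cross_pair_notin.
have [lam rel lam_nz] := exists_linear_relation p lt_ed.
have [s s_face s_msum] := exists_cross_face_msum P0 Pl Pr rel lam_nz.
exact: (PD s).1 s_face s_msum.
Qed.
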